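(* For every integer $N\ge 2$, every $\delta<0$, every $\beta>0$ and every $\theta\ge 0$, and for $E\in\{E_r,E_p\}$, $$\frac{N^2\theta}{2}\Big(H_N+\frac{1}{N-1}\Big)\le E(\theta)\le N(N-1)\,\theta\,\big(H_N+1\big).$$
   Context: Fix an integer $N\ge 2$, a real number $\delta<0$, and $\beta>0$. For $\theta\in\mathbb{R}$ put $x=\beta(\theta+\delta)$. For $1\le i\le N-1$ define $u_{i,i+1}=\frac{i(N-i)}{N^2}(1+e^{-x})^{-1}$, $u_{i,i-1}=\frac{i(N-i)}{N^2}(1+e^{x})^{-1}$, $u_{i,i}=1-u_{i,i+1}-u_{i,i-1}$, and $u_{i,j}=0$ for $|i-j|\ge 2$. Let $U=(u_{ij})_{i,j=1}^{N-1}$ and $\mathcal{N}=(n_{ij})_{i,j=1}^{N-1}=(I-U)^{-1}$. Define $E_r(\theta)=\frac{\theta}{2}\sum_{i=1}^{N-1}(n_{1i}+n_{N-1,i})\,i$ and $E_p(\theta)=\frac{\theta}{2}\sum_{i=1}^{N-1}(n_{1i}+n_{N-1,i})\,(N-i)$. The harmonic number is defined here as $H_N=\sum_{j=1}^{N-1}\frac1j$ (note the sum stops at $N-1$). *)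

From HB Require Import structures.
From mathcomp Require Import all_boot all_order all_algebra.
From mathcomp Require Import all_classical all_reals all_analysis.
Unset Printing Implicit Defensive.
Import Order.TTheory GRing.Theory Num.Theory.
Local Open Scope ring_scope.

Section Defs.
Variable R : realType.

Definition xval (beta delta theta : R) : R := beta * (theta + delta).

(* paper indices a in {1,...,N-1} (nat) *)
Definition u_up (N : nat) (beta delta theta : R) (a : nat) : R :=
  (((a * (N - a))%N)%:R / ((N ^ 2)%N)%:R) / (1 + expR (- xval beta delta theta)).
Definition u_down (N : nat) (beta delta theta : R) (a : nat) : R :=
  (((a * (N - a))%N)%:R / ((N ^ 2)%N)%:R) / (1 + expR (xval beta delta theta)).

(* U = (u_{ab})_{a,b=1}^{N-1}; the ordinal i : 'I_(N.-1) stands for index i+1 *)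
Definition Umat (N : nat) (beta delta theta : R) : 'M[R]_(N.-1) :=
  \matrix_(i, j)
    let a := i.+1 in let b := j.+1 in
    if b == a.+1 then u_up N beta delta theta a
    else if b.+1 == a then u_down N beta delta theta a
    else if b == a then 1 - u_up N beta delta theta a - u_down N beta delta theta a
    else 0.

Definition Nmat (N : nat) (beta delta theta : R) : 'M[R]_(N.-1) :=
  invmx (1%:M - Umat N beta delta theta).

(* n_{1,i} + n_{N-1,i}  (ordinal 0 is index 1, ordinal N-2 is index N-1) *)
Definition nsum (N : nat) (beta delta theta : R) (i : 'I_(N.-1)) : R :=
  \sum_(k : 'I_(N.-1))
     (((k : nat) == 0%N)%:R + ((k : nat) == N.-2)%:R) * Nmat N beta delta theta k i.

Definition E_r (N : nat) (beta delta theta : R) : R :=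
  theta / 2 * \sum_(i : 'I_(N.-1)) nsum N beta delta theta i * (i.+1)%:R.

Definition E_p (N : nat) (beta delta theta : R) : R :=
  theta / 2 * \sum_(i : 'I_(N.-1)) nsum N beta delta theta i * ((N - i.+1)%N)%:R.

Definition H (N : nat) : R := \sum_(1 <= j < N) (j%:R)^-1.

End Defs.

From HB Require Import structures.
From mathcomp Require Import all_boot all_order all_algebra.
From mathcomp Require Import all_classical all_reals all_analysis.
From mathcomp Require Import ring lra zify.
Import Order.TTheory GRing.Theory Num.Theory.
Local Open Scope ring_scope.
Set Implicit Arguments.
Unset Strict Implicit.

(* Write N = n + 1, r = exp(-x) and c_a = a (N - a) / N^2.  The matrix I - U is
   tridiagonal: row a is c_a (e_a - e_{a+1}/(1+r) - r e_{a-1}/(1+r)).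
   1. Linear algebra (section BirthDeath, for arbitrary nonzero c_1..c_n):
      a row vector y with y (I - U) = 0 gives an r-harmonic sequence
      w_a = c_a y_a vanishing at a = 0 and a = N, hence y = 0, so I - U is
      invertible; and the explicit vector y_a = kappa psi_a / c_a with
      psi_a = r T_n + r^(N-a) solves y (I - U) = e_1 + e_n.  Here
      T_k = 1 + r + ... + r^(k-1).  Hence n_{1i} + n_{N-1,i} = y_i.
   2. Substituting, E = theta/2 N^2 (1+r) Q_e / T_N, where
      Q_e = sum_{i<n} (T_n + r^(e i)) / (i+1) and e is the identity (E_r) or
      the reversal of [0, n) (E_p).
   3. Scalar estimates (section RatioBounds), for any e : [0, n) -> [0, n) with
      sum_i r^(e i) = T_n:
      H_N + 1/n <= (1+r) Q_e / T_N <= 2n (H_N + 1) / (n+1).  The upper bound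
      rests on r^k + r^(n-k) <= 1 + r^n, which gives 2 T_N <= (n+1)(1 + r^n).
   The theorem follows by multiplying these bounds by theta N^2 / 2. *)

Lemma natS_neq0 (R : numFieldType) (k : nat) : 1 + k%:R != 0 :> R.
Proof. by rewrite addrC natr1 pnatr_eq0. Qed.

Section Geometric.
Variables (R : realFieldType) (r : R).

Definition geo (k : nat) : R := \sum_(i < k) r ^+ i.

Lemma geoSr k : geo k.+1 = geo k + r ^+ k.
Proof. by rewrite /geo big_ord_recr. Qed.

Lemma geoSl k : geo k.+1 = 1 + r * geo k.
Proof.
rewrite /geo big_ord_recl expr0 mulr_sumr; congr (_ + _).
by apply: eq_bigr => i _; rewrite exprS.
Qed.

Lemma geo_mul1Dr n : (1 + r) * geo n = 2 * geo n.+1 - (1 + r ^+ n).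
Proof. by have := geoSl n; have := geoSr n; lra. Qed.

Lemma geo_rev k : \sum_(i < k) r ^+ (k - i.+1) = geo k.
Proof. by rewrite /geo -(big_mkord xpredT (fun i => r ^+ i)) big_rev_mkord subn0. Qed.

Hypothesis r_ge0 : 0 <= r.

Lemma geo_ge1 k : (0 < k)%N -> 1 <= geo k.
Proof.
case: k => [//|k] _; rewrite geoSl lerDl mulr_ge0 //.
by apply: sumr_ge0 => i _; rewrite exprn_ge0.
Qed.

Lemma geoS_gt0 k : 0 < geo k.+1.
Proof. exact: lt_le_trans ltr01 (geo_ge1 (ltn0Sn k)). Qed.

(* 1 + r^n - r^k - r^(n-k) = (1 - r^k)(1 - r^(n-k)), a product of two factors
   of the same sign. *)
Lemma pow_pair_le n k : (k <= n)%N -> r ^+ k + r ^+ (n - k) <= 1 + r ^+ n.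
Proof.
move=> le_kn.
have -> : 1 + r ^+ n = r ^+ k + r ^+ (n - k) + (1 - r ^+ k) * (1 - r ^+ (n - k)).
  by rewrite mulrBl !mul1r mulrBr mulr1 -exprD subnKC //; ring.
rewrite lerDl; have [r_le1 | r_gt1] := lerP r 1.
  by rewrite mulr_ge0 // subr_ge0 exprn_ile1.
by rewrite mulr_le0 // subr_le0 exprn_ege1 // ltW.
Qed.

Lemma pow_le_1D n k : (k <= n)%N -> r ^+ k <= 1 + r ^+ n.
Proof. by move=> /pow_pair_le; apply: le_trans; rewrite lerDl exprn_ge0. Qed.

(* Pairing r^k with r^(n-k) in 2 T_(n+1). *)
Lemma geo_pair_le n : 2 * geo n.+1 <= n.+1%:R * (1 + r ^+ n).
Proof.
have -> : n.+1%:R * (1 + r ^+ n) = \sum_(i < n.+1) (1 + r ^+ n).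
  by rewrite sumr_const card_ord mulr_natl.
rewrite -[2]/(1 + 1) mulrDl mul1r -{2}geo_rev /geo -big_split /=.
by apply: ler_sum => i _; rewrite subSS pow_pair_le // -ltnS.
Qed.
End Geometric.

(* A sequence with (1 + r) w_a = w_(a-1) + r w_(a+1) on 1..n and w_0 = w_(n+1) = 0
   vanishes: inductively r^a w_(a+1) = w_1 T_(a+1), and T_(n+1) > 0 forces w_1 = 0. *)
Lemma harmonic_seq_zero (R : realFieldType) (r : R) n (w : nat -> R) :
  0 < r -> w 0%N = 0 -> w n.+1 = 0 ->
  (forall a, (a < n)%N -> (1 + r) * w a.+1 = w a + r * w a.+2) ->
  forall a, (a <= n.+1)%N -> w a = 0.
Proof.
move=> r_gt0 w0 wN rec.
have shape a : (a <= n)%N ->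
    r ^+ a * w a.+1 = w 1%N * geo r a.+1 /\ r ^+ a * w a = r * w 1%N * geo r a.
  elim: a => [|a IH] a_le.
    by rewrite /geo big_ord1 big_ord0 w0 !expr0 !mul1r mulr1 mulr0.
  have [IH1 IH2] := IH (ltnW a_le); split; last by rewrite exprS -mulrA IH1; ring.
  have step : r * w a.+2 = (1 + r) * w a.+1 - w a by rewrite rec //; ring.
  by rewrite exprSr -mulrA step mulrBr mulrCA IH1 IH2 !geoSr exprS; ring.
have [shapeN _] := shape n (leqnn n); rewrite wN mulr0 in shapeN.
have w1 : w 1%N = 0.
  move/esym/eqP: shapeN; rewrite mulf_eq0 (gt_eqF (geoS_gt0 (ltW r_gt0) n)) orbF.
  by move/eqP.
case=> [//|a] a_le; have [shape_a _] := shape a a_le.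
move/eqP: shape_a; rewrite w1 mul0r mulf_eq0 expf_eq0 (gt_eqF r_gt0) andbF /=.
by move/eqP.
Qed.

(* Weights 1, 1/2, 1/3, ... are at most 1, 1/2, 1/2, ...: this gives the
   estimate of the fluctuating part of Q_e used in the upper bound. *)
Lemma harmonic_weights_le (R : realFieldType) m (X : nat -> R) :
  (0 < m)%N -> (forall i, 0 <= X i) ->
  \sum_(i < m) X i / i.+1%:R <= X 0%N / 2 + (\sum_(i < m) X i) / 2.
Proof.
case: m => [//|m] _ X_ge0; rewrite !big_ord_recl /= divr1.
have tail_le : \sum_(i < m) X (bump 0 i) / (bump 0 i).+1%:R
               <= (\sum_(i < m) X (bump 0 i)) / 2.
  rewrite mulr_suml; apply: ler_sum => i _.
  by rewrite ler_wpM2l // lef_pV2 ?posrE ?ltr0n // ler_nat.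
by have := X_ge0 0%N; lra.
Qed.

Lemma H_ord (R : realType) m : H R m.+1 = \sum_(i < m) (i.+1%:R)^-1.
Proof. by rewrite /H big_add1 /= big_mkord. Qed.

Lemma H_ge1 (R : realType) m : (0 < m)%N -> 1 <= H R m.+1.
Proof.
case: m => [//|m] _; rewrite H_ord big_ord_recl /= invr1 lerDl.
by apply: sumr_ge0 => i _; rewrite invr_ge0.
Qed.

(* The final comparison in the upper bound, with A = (1 + r) T_n = 2S - P,
   S = T_(n+1) and P = 1 + r^n: it follows from 2S <= (m+1) P, H >= 1, m >= 2. *)
Lemma upper_arith (R : realFieldType) (m S P Hm : R) :
  0 < S -> 0 <= P -> 1 <= Hm -> 2 <= m -> 2 * S <= (m + 1) * P ->
  ((2 * S - P) * Hm + P + (2 * S - P) / 2) * (m + 1) <= 2 * m * (Hm + 1) * S.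
Proof.
move=> S_gt0 P_ge0 H_ge1 m_ge2 pair_le.
have pair_H : (2 * S - (m + 1) * P) * (Hm - 1/2) <= 0.
  by rewrite mulr_le0_ge0 // ?subr_le0 ?subr_ge0 //; lra.
have slack : 0 <= (m - 2) * S by rewrite mulr_ge0 ?subr_ge0 // ltW.
lra.
Qed.

Section RatioBounds.
Variables (R : realType) (n : nat) (r : R) (e : nat -> nat).
Hypotheses (n_gt0 : (0 < n)%N) (r_ge0 : 0 <= r).
Hypothesis e_lt : forall i, (i < n)%N -> (e i < n)%N.
Hypothesis e_sum : \sum_(i < n) r ^+ e i = geo r n.

Local Notation T := (geo r n).
Local Notation S := (geo r n.+1).
Local Notation Hn := (H R n.+1).

Definition qsum : R := \sum_(i < n) (T + r ^+ e i) / i.+1%:R.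

Lemma qsum_split :
  (1 + r) * qsum = (1 + r) * T * Hn + \sum_(i < n) (1 + r) * r ^+ e i / i.+1%:R.
Proof.
rewrite H_ord /qsum [LHS]mulr_sumr [X in _ = X + _]mulr_sumr -big_split /=.
by apply: eq_bigr => i _; ring.
Qed.

(* Lower bound: every weight 1/(i+1) is at least 1/n, and (1 + r) T_n >= T_(n+1). *)
Lemma ratio_lower : Hn + n%:R^-1 <= (1 + r) * qsum / S.
Proof.
rewrite ler_pdivlMr ?geoS_gt0 // qsum_split.
have tail_ge : (1 + r) * T * n%:R^-1 <= \sum_(i < n) (1 + r) * r ^+ e i / i.+1%:R.
  rewrite -e_sum mulr_sumr mulr_suml; apply: ler_sum => i _.
  rewrite ler_wpM2l ?mulr_ge0 ?exprn_ge0 ?addr_ge0 // lef_pV2 ?posrE ?ltr0n //.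
  by rewrite ler_nat ltn_ord.
have S_le : S <= (1 + r) * T by have := geoSl r n; have := geo_ge1 r_ge0 n_gt0; lra.
have H_ge0 : 0 <= Hn + n%:R^-1 by rewrite addr_ge0 ?invr_ge0 // (le_trans ler01) ?H_ge1.
apply: le_trans (_ : (1 + r) * T * (Hn + n%:R^-1) <= _).
  by rewrite [X in _ <= X]mulrC ler_wpM2l.
by rewrite mulrDr lerD2l.
Qed.

(* Upper bound: for n = 1 it is an equality; for n >= 2 the fluctuating part
   is at most (1 + r^n) + (1 + r) T_n / 2 by harmonic_weights_le. *)
Lemma ratio_upper : (1 + r) * qsum / S <= 2 * n%:R * (Hn + 1) / n.+1%:R.
Proof.
have S_gt0 := geoS_gt0 r_ge0 n; have H_ge1n := H_ge1 R n_gt0.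
rewrite ler_pdivrMr // mulrAC ler_pdivlMr ?ltr0n //.
have [n_le1 | n_ge2] := leqP n 1.
  have n1 : n = 1%N by lia.
  move: e_sum; rewrite /qsum n1 !big_ord1 /geo !big_ord_recr !big_ord0 /= => ->.
  by rewrite H_ord big_ord1 /=; lra.
pose X i := (1 + r) * r ^+ e i.
have X_ge0 i : 0 <= X i by rewrite mulr_ge0 ?addr_ge0 ?exprn_ge0.
have X0_le : X 0%N <= 2 * (1 + r ^+ n).
  have e0_lt := e_lt n_gt0.
  rewrite /X mulrDl mul1r -exprS.
  by have := pow_le_1D r_ge0 (ltnW e0_lt); have := pow_le_1D r_ge0 e0_lt; lra.
have tail_le := harmonic_weights_le n_gt0 X_ge0.
rewrite -mulr_sumr e_sum in tail_le.
have q_le : (1 + r) * qsum <= (1 + r) * T * Hn + (1 + r ^+ n) + (1 + r) * T / 2.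
  by rewrite qsum_split; move: tail_le X0_le; rewrite /X; lra.
apply: le_trans (ler_wpM2r (ler0n R n.+1) q_le) _.
rewrite geo_mul1Dr -[n.+1%:R]natr1; apply: upper_arith; rewrite ?natr1 ?geo_pair_le //.
  by rewrite addr_ge0 ?exprn_ge0.
by rewrite (ler_nat R 2).
Qed.
End RatioBounds.

Section BirthDeath.
Variables (R : realFieldType) (n : nat) (r : R) (c : nat -> R).

Definition bd_mx : 'M[R]_n := \matrix_(i < n, j < n)
  (c i.+1 * ((i == j :> nat)%:R - (j == i.+1 :> nat)%:R / (1 + r)
             - r * (j.+1 == i :> nat)%:R / (1 + r))).

(* The row vector v read with indices 1..n and padded by zeros at 0 and n+1. *)
Definition pad (v : 'rV[R]_n) (a : nat) : R := \sum_(i < n) (i.+1 == a)%:R * v 0 i.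

Lemma pad_weight (v : 'rV[R]_n) (F : nat -> R) (a : nat) :
  \sum_(i < n) (i.+1 == a)%:R * (v 0 i * F i.+1) = F a * pad v a.
Proof.
rewrite /pad mulr_sumr; apply: eq_bigr => i _.
by case: eqP => [<-|_]; rewrite ?mul0r ?mulr0 // !mul1r mulrC.
Qed.

Lemma pad_val (v : 'rV[R]_n) (i : 'I_n) : pad v i.+1 = v 0 i.
Proof.
rewrite /pad (bigD1 i) //= eqxx mul1r big1 ?addr0 // => k k_neq_i.
by rewrite eqSS (negbTE (k_neq_i : (k : nat) != i)) mul0r.
Qed.

Lemma pad_out (v : 'rV[R]_n) (a : nat) : (a == 0)%N || (n < a)%N -> pad v a = 0.
Proof.
move=> a_out; rewrite /pad big1 // => i _.
suff /negbTE -> : i.+1 != a by rewrite mul0r.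
by apply/eqP => ia; move: a_out; rewrite -ia; have := ltn_ord i; lia.
Qed.

(* Column j of v (I - U) only sees the three neighbours of j + 1; the boundary
   terms vanish through the zero padding. *)
Lemma row_mul_bd (v : 'rV[R]_n) (j : 'I_n) : (v *m bd_mx) 0 j =
  c j.+1 * pad v j.+1 - c j * pad v j / (1 + r) - r * (c j.+2 * pad v j.+2) / (1 + r).
Proof.
rewrite -!(pad_weight v c) [r * _]mulr_sumr !mulr_suml -!sumrB mxE.
apply: eq_bigr => i _.
by rewrite mxE !eqSS [(_.+1 == j)]eq_sym [(_ == j.+1)]eq_sym; ring.
Qed.

Hypothesis r_gt0 : 0 < r.
Hypothesis c_neq0 : forall a, (0 < a <= n)%N -> c a != 0.

Lemma r1_neq0 : 1 + r != 0.
Proof. by rewrite gt_eqF // ltr_wpDl // ltW. Qed.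

(* A left kernel vector v gives the sequence w_a = c_a v_a, which is
   r-harmonic and vanishes at both ends, so v = 0. *)
Lemma bd_unit : bd_mx \in unitmx.
Proof.
rewrite unitmxE unitfE; apply/negP => /det0P [v v_neq0 v_ker].
pose w a := c a * pad v a.
have w_zero : forall a, (a <= n.+1)%N -> w a = 0.
  apply: (harmonic_seq_zero r_gt0); rewrite /w ?pad_out ?mulr0 ?ltnSn ?orbT //.
  move=> a a_lt; have := congr1 (fun M : 'rV_n => (1 + r) * M 0 (Ordinal a_lt)) v_ker.
  rewrite row_mul_bd !mxE mulr0 /= => col_eq.
  by apply/eqP; rewrite -subr_eq0 -col_eq; apply/eqP; field; exact: r1_neq0.
apply/negP: v_neq0; rewrite negbK; apply/eqP/rowP => i; rewrite !mxE -pad_val.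
have := w_zero i.+1 (ltnW (ltn_ord i)); rewrite /w => /eqP.
by rewrite mulf_eq0 (negbTE (c_neq0 _)) ?ltn_ord //= => /eqP.
Qed.

(* psi_a = r T_n + r^(N-a) is r-harmonic on 1..n with psi_0 = r T_N and
   psi_N = T_N; kappa normalises the boundary contributions to 1. *)
Definition psi (a : nat) : R := r * geo r n + r ^+ (n.+1 - a).
Definition kappa : R := (1 + r) / (r * geo r n.+1).
Definition bd_sol : 'rV[R]_n := \row_(i < n) (kappa * psi i.+1 / c i.+1).

Lemma psi_rec a : (a < n)%N -> (1 + r) * psi a.+1 = psi a + r * psi a.+2.
Proof.
move=> a_lt; rewrite /psi.
have -> : (n.+1 - a = (n - a.+1).+2)%N by lia.
have -> : (n.+1 - a.+1 = (n - a.+1).+1)%N by lia.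
by rewrite subSS !exprS; ring.
Qed.

Lemma psi0 : psi 0 = r * geo r n.+1.
Proof. by rewrite /psi subn0 geoSr exprS; ring. Qed.

Lemma psiN : psi n.+1 = geo r n.+1.
Proof. by rewrite /psi subnn expr0 geoSl; ring. Qed.

Lemma bd_sol_weight a : (a <= n.+1)%N ->
  c a * pad bd_sol a = kappa * (psi a - (a == 0)%:R * psi 0 - (a == n.+1)%:R * psi n.+1).
Proof.
case: a => [|a] a_le; first by rewrite pad_out //= mulr0 mul1r mul0r subrr subr0 mulr0.
have [-> | a_neq] := eqVneq a n.
  by rewrite pad_out ?ltnSn ?orbT //= eqxx mul1r mul0r subr0 subrr !mulr0.
have a_lt : (a < n)%N by rewrite ltn_neqAle a_neq -ltnS.
rewrite (pad_val _ (Ordinal a_lt)) /bd_sol mxE /= eqSS (negbTE a_neq) !mul0r !subr0.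
by rewrite mulrC divfK // c_neq0.
Qed.

(* bd_sol solves y (I - U) = e_1 + e_n, so it is the row n_{1,.} + n_{N-1,.}. *)
Lemma bd_sol_mul :
  bd_sol *m bd_mx = \row_(j < n) ((j == 0 :> nat)%:R + (j == n.-1 :> nat)%:R).
Proof.
apply/rowP => j; have j_lt := ltn_ord j.
rewrite row_mul_bd mxE !bd_sol_weight /=; try lia.
have -> : (j.+1 == n.+1) = false by apply/eqP; lia.
have -> : (j == n.+1 :> nat) = false by apply/eqP; lia.
have -> : (j.+2 == n.+1) = (j == n.-1 :> nat) by apply/eqP/eqP; lia.
have -> : psi j.+1 = (psi j + r * psi j.+2) / (1 + r).
  by rewrite -psi_rec // mulrAC divff ?mul1r // r1_neq0.
have S_gt0 := geoS_gt0 (ltW r_gt0) n.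
rewrite psi0 psiN /kappa (_ : false%:R = 0 :> R) // !mul0r !subr0; field.
by rewrite r1_neq0 !gt_eqF.
Qed.
End BirthDeath.

Definition coef (R : realFieldType) (N a : nat) : R :=
  ((a * (N - a))%N)%:R / ((N ^ 2)%N)%:R.

Lemma coef_neq0 (R : realFieldType) (n a : nat) : (0 < a <= n)%N -> coef R n.+1 a != 0.
Proof.
move=> /andP[a_gt0 a_le]; rewrite /coef mulf_neq0 // ?invr_eq0 pnatr_eq0 -lt0n.
by rewrite muln_gt0 a_gt0 subn_gt0 ltnS.
Qed.

Section Model.
Variables (R : realType) (n : nat) (beta delta theta : R).
Local Notation r := (expR (- xval R beta delta theta)).
Local Notation c := (coef R n.+1).

Lemma r_gt0 : 0 < r. Proof. exact: expR_gt0. Qed.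

Lemma u_down_eq a : u_down R n.+1 beta delta theta a = c a * r / (1 + r).
Proof.
rewrite /u_down -/(coef R n.+1 a) -[X in 1 + X]invrK -expRN.
by have := r_gt0 => r_pos; field; rewrite !gt_eqF ?ltr_wpDl // ltW.
Qed.

Lemma Umat_bd : 1%:M - Umat R n.+1 beta delta theta = bd_mx n r c.
Proof.
apply/matrixP => -[a a_lt] [b b_lt].
rewrite !mxE /= u_down_eq /u_up -/(c _) !eqSS [(b == a)]eq_sym -[Ordinal a_lt == _]/(a == b).
case: (@eqP _ b a.+1) => [b1|b1]; case: (@eqP _ b.+1 a) => [b2|b2];
  case: (@eqP _ a b) => [b3|b3]; rewrite /=; try lia; field; exact: r1_neq0 r_gt0.
Qed.

Lemma nsum_bd (i : 'I_n) : nsum R n.+1 beta delta theta i = bd_sol n r c 0 i.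
Proof.
have c_neq0 := @coef_neq0 R n.
rewrite /nsum /Nmat Umat_bd.
have -> : bd_sol n r c = bd_sol n r c *m bd_mx n r c *m invmx (bd_mx n r c).
  by rewrite -mulmxA mulmxV ?mulmx1 // (bd_unit r_gt0 c_neq0).
by rewrite (bd_sol_mul r_gt0 c_neq0) mxE; apply: eq_bigr => k _; rewrite mxE.
Qed.

Lemma nsum_closed (i : 'I_n) : nsum R n.+1 beta delta theta i =
  (1 + r) * (geo r n + r ^+ (n - i.+1)) / geo r n.+1
  * ((n.+1 ^ 2)%N%:R / ((i.+1 * (n - i))%N)%:R).
Proof.
have i_lt := ltn_ord i; have S_gt0 := geoS_gt0 (ltW r_gt0) n.
rewrite nsum_bd mxE /kappa /psi /coef subSS.
have -> : (n - i = (n - i.+1).+1)%N by lia.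
by rewrite exprS; field; rewrite !natS_neq0 !gt_eqF // r_gt0.
Qed.

(* E_r weights index i by i; reversing the summation gives e = id. *)
Lemma E_r_closed : E_r R n.+1 beta delta theta =
  theta / 2 * ((n.+1 ^ 2)%N%:R * ((1 + r) * qsum n r id / geo r n.+1)).
Proof.
rewrite /E_r /qsum; congr (_ * _).
rewrite (reindex_inj rev_ord_inj) mulr_sumr mulr_suml mulr_sumr; apply: eq_bigr => i _.
have i_lt := ltn_ord i; have S_gt0 := geoS_gt0 (ltW r_gt0) n.
rewrite nsum_closed /=.
have -> : (n - (n - i.+1).+1 = i)%N by lia.
have -> : (n - (n - i.+1) = i.+1)%N by lia.
by rewrite natrM; field; rewrite !natS_neq0 gt_eqF.
Qed.

(* E_p weights index i by N - i, which gives the reversal e i = n - (i+1). *)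
Lemma E_p_closed : E_p R n.+1 beta delta theta =
  theta / 2 * ((n.+1 ^ 2)%N%:R * ((1 + r) * qsum n r (fun i => n - i.+1)%N / geo r n.+1)).
Proof.
rewrite /E_p /qsum; congr (_ * _).
rewrite mulr_sumr mulr_suml mulr_sumr; apply: eq_bigr => i _.
have S_gt0 := geoS_gt0 (ltW r_gt0) n.
have ni_neq0 : (n - i)%:R != 0 :> R by rewrite pnatr_eq0 -lt0n subn_gt0.
by rewrite nsum_closed subSS natrM; field; rewrite ni_neq0 !natS_neq0 gt_eqF.
Qed.
End Model.

Theorem theorem1 (R : realType) (N : nat) (delta beta theta : R) :
  (2 <= N)%N -> delta < 0 -> 0 < beta -> 0 <= theta ->
  forall E : nat -> R -> R -> R -> R, (E = @E_r R \/ E = @E_p R) ->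
    ((N ^ 2)%N)%:R * theta / 2 * (H R N + ((N.-1)%:R)^-1) <= E N beta delta theta /\
    E N beta delta theta <= ((N * N.-1)%N)%:R * theta * (H R N + 1).
Proof.
case: N => [//|n] n_gt0 _ _ theta_ge0 E E_def /=.
have r_ge0 := ltW (@r_gt0 R beta delta theta).
set r := expR _ in r_ge0 *.
have [e [e_lt e_sum ->]] : exists e : nat -> nat,
    [/\ forall i, (i < n)%N -> (e i < n)%N, \sum_(i < n) r ^+ e i = geo r n &
     E n.+1 beta delta theta =
       theta / 2 * ((n.+1 ^ 2)%N%:R * ((1 + r) * qsum n r e / geo r n.+1))].
  case: E_def => ->; [exists id | exists (fun i => n - i.+1)%N]; split => //.
  - exact: E_r_closed.
  - by move=> i i_lt; rewrite ltn_subrL.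
  - exact: geo_rev.
  - exact: E_p_closed.
have lower := ratio_lower n_gt0 r_ge0 e_sum.
have upper := ratio_upper n_gt0 r_ge0 e_lt e_sum.
set K := (1 + r) * qsum n r e / geo r n.+1 in lower upper *.
have scale_ge0 : 0 <= theta / 2 * (n.+1 ^ 2)%N%:R by rewrite mulr_ge0 ?divr_ge0.
rewrite mulrA; split.
  have -> : (n.+1 ^ 2)%N%:R * theta / 2 = theta / 2 * (n.+1 ^ 2)%N%:R by ring.
  exact: (ler_wpM2l scale_ge0 lower).
apply: le_trans (ler_wpM2l scale_ge0 upper) _.
rewrite le_eqVlt natrX natrM -natr1; apply/orP; left; apply/eqP.
by field; rewrite natS_neq0.
Qed.
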